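(* Let $n$ agents share an additive valuation $v$ with nonnegative item values, and let items $g_1,\dots,g_T$ lie on a line. For $t\in[T]$ let $X^t$ be the contiguous leximin$^2$ allocation of $M_t=\{g_1,\dots,g_t\}$. Then for every $t<T$ and every $j\in[n]$, $P_j(X^t)\le P_j(X^{t+1})$.
   Context: Contiguous allocation of $M_t$: agent $j$ receives the $j$-th block from the left. For a contiguous allocation $A$, $P(A)=(\ell_0,\dots,\ell_n)$ with $\ell_0=0$ and $P_j(A)=\ell_j$ the index of the last item of $A_j$. A leximin allocation is a contiguous allocation maximizing the lowest agent value, subject to that the second-lowest, and so on. The leximin$^2$ allocation is the leximin contiguous allocation with lexicographically smallest $P(A)$. *)

From mathcomp Require Import all_boot all_order all_algebra.
Set Implicit Arguments. Unset Strict Implicit. Unset Printing Implicit Defensive.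
Import Order.TTheory GRing.Theory Num.Theory.

(* Items g_1..g_T are indexed 0..T-1 (item g_{i+1} has value v i).
   A contiguous allocation of M_t = {g_1,..,g_t} to n agents is represented by
   its cut vector P = (l_0, l_1, ..., l_n) with l_0 = 0, l_0 <= ... <= l_n = t;
   agent j (1 <= j <= n) receives items g_{l_{j-1}+1}, ..., g_{l_j}
   (i.e. indices l_{j-1} <= i < l_j), possibly an empty block. *)

Definition contig_alloc (n t : nat) (P : seq nat) : bool :=
  [&& size P == n.+1, nth 0%N P 0 == 0%N, sorted leq P & nth 0%N P n == t].

Definition agent_value (R : realDomainType) (v : nat -> R) (P : seq nat) (j : nat) : R :=
  (\sum_(nth 0%N P j.-1 <= i < nth 0%N P j) v i)%R.

Definition values (R : realDomainType) (v : nat -> R) (n : nat) (P : seq nat) : seq R :=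
  [seq agent_value v P j | j <- iota 1 n].

Fixpoint lexle (d : Order.disp_t) (T : orderType d) (s1 s2 : seq T) : bool :=
  match s1, s2 with
  | [::], _ => true
  | _ :: _, [::] => false
  | x :: s1', y :: s2' => ((x < y)%O || ((x == y) && lexle s1' s2'))
  end.

Definition leximin_ge (R : realDomainType) (v : nat -> R) (n : nat) (P Q : seq nat) : bool :=
  lexle (sort <=%O (values v n Q)) (sort <=%O (values v n P)).

Definition is_leximin (R : realDomainType) (v : nat -> R) (n t : nat) (P : seq nat) : Prop :=
  contig_alloc n t P /\ forall Q, contig_alloc n t Q -> leximin_ge v n P Q.

Definition is_leximin2 (R : realDomainType) (v : nat -> R) (n t : nat) (P : seq nat) : Prop :=
  is_leximin v n t P /\ forall Q, is_leximin v n t Q -> lexle P Q.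

From mathcomp Require Import all_boot all_order all_algebra.
From mathcomp Require Import lra zify.
Set Implicit Arguments. Unset Strict Implicit. Unset Printing Implicit Defensive.
Import Order.TTheory GRing.Theory Num.Theory.

(* For a threshold th let F_th s := sum_(z in s) min z th.  If a sorted vector
   s is lexicographically strictly below a sorted vector u, then F_th s < F_th u
   for every th slightly above the first value where they differ, with equality
   below it.  Now take the cut-wise minimum of X = X^t and Y = X^(t+1) (an
   allocation of M_t) and their cut-wise maximum (an allocation of M_(t+1)).
   Agent values are differences of the nondecreasing prefix sums, so passing to
   the meet and join can only increase F_th of the two value vectors together.
   If the meet were strictly leximin-worse than X, F_th would drop strictly just
   above the first difference, forcing the join to be strictly leximin-better
   than Y, which is impossible.  Hence the meet is leximin too; it lies cut-wise
   below X, so it equals X by lexicographic minimality of the cuts of X. *)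

Section TruncatedSum.
Variable R : realDomainType.
Local Open Scope ring_scope.

Definition trunc_sum (s : seq R) (th : R) : R := \sum_(z <- s) Num.min z th.

Lemma trunc_sum_cons x s th : trunc_sum (x :: s) th = Num.min x th + trunc_sum s th.
Proof. by rewrite /trunc_sum big_cons. Qed.

Lemma trunc_sum_le s th : trunc_sum s th <= th *+ size s.
Proof.
elim: s => [|x s IHs]; first by rewrite /trunc_sum big_nil.
by rewrite trunc_sum_cons mulrS lerD // ge_min lexx orbT.
Qed.

Lemma trunc_sum_all_ge s th : all (>= th) s -> trunc_sum s th = th *+ size s.
Proof.
elim: s => [|x s IHs] /=; first by rewrite /trunc_sum big_nil.
by case/andP=> /min_idPr hx hs; rewrite trunc_sum_cons IHs // hx mulrS.
Qed.

Lemma trunc_sum_sort s th : trunc_sum (sort <=%O s) th = trunc_sum s th.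
Proof. exact/perm_big/permEl/perm_sort. Qed.

Lemma sorted_head_le_all (x : R) s th :
  sorted <=%O (x :: s) -> th <= x -> all (>= th) (x :: s).
Proof.
move=> sxs thx; apply/allP=> z; rewrite inE => /predU1P[-> //|zs].
exact: le_trans thx (allP (order_path_min le_trans sxs) z zs).
Qed.

Lemma lexle_sorted_trunc_sum (s u : seq R) :
    sorted <=%O s -> sorted <=%O u -> size s = size u -> lexle s u -> s <> u ->
  exists a b, a < b /\ forall th, th <= b ->
    [/\ trunc_sum s th <= trunc_sum u th,
        th <= a -> trunc_sum s th = trunc_sum u th
      & a < th -> trunc_sum s th < trunc_sum u th].
Proof.
elim: s u => [|x s IHs] [|y u] //= ss su [size_su] /orP[xy | /andP[/eqP<- lex_su]] neq.
- exists x, y; split=> // th thy.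
  rewrite (trunc_sum_all_ge (sorted_head_le_all su thy)) trunc_sum_cons /=.
  rewrite mulrS -size_su; have Fs := trunc_sum_le s th.
  split=> [|thx|xth].
  + by rewrite lerD // ge_min lexx orbT.
  + by rewrite -trunc_sum_cons trunc_sum_all_ge ?(sorted_head_le_all ss) ?mulrS.
  + by rewrite ltr_leD // (min_idPl (ltW xth)).
- have neq' : s <> u by move=> esu; apply: neq; rewrite esu.
  have [a [b [ab Fsu]]] :=
    IHs u (path_sorted ss) (path_sorted su) size_su lex_su neq'.
  exists a, b; split=> // th thb; have [le_Fsu eq_Fsu lt_Fsu] := Fsu th thb.
  rewrite !trunc_sum_cons lerD2l ltrD2l; split=> // tha.
  by rewrite eq_Fsu.
Qed.

Lemma lexle_sorted_trunc_sum_sort (s u : seq R) : size s = size u ->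
    lexle (sort <=%O s) (sort <=%O u) -> sort <=%O s <> sort <=%O u ->
  exists a b, a < b /\ forall th, th <= b ->
    [/\ trunc_sum s th <= trunc_sum u th,
        th <= a -> trunc_sum s th = trunc_sum u th
      & a < th -> trunc_sum s th < trunc_sum u th].
Proof.
move=> size_su lex_su neq.
have [|a [b [ab Fsu]]] := lexle_sorted_trunc_sum (sort_sorted le_total s)
  (sort_sorted le_total u) _ lex_su neq; first by rewrite !size_sort.
exists a, b; split=> // th thb.
by rewrite -(trunc_sum_sort s) -(trunc_sum_sort u); exact: Fsu.
Qed.

Lemma leximin_exchange (x y m M : seq R) : size m = size x -> size M = size y ->
    (forall th, trunc_sum x th + trunc_sum y th <= trunc_sum m th + trunc_sum M th) ->
    lexle (sort <=%O m) (sort <=%O x) -> lexle (sort <=%O M) (sort <=%O y) ->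
  sort <=%O m = sort <=%O x.
Proof.
move=> size_mx size_My dom lex_mx lex_My.
have [//|/eqP neq_mx] := eqVneq (sort <=%O m) (sort <=%O x); exfalso.
have [a [b [ab Fmx]]] := lexle_sorted_trunc_sum_sort size_mx lex_mx neq_mx.
have [_ _ /(_ ab) ltFb] := Fmx b (lexx b); have domb := dom b.
have [eq_My|/eqP neq_My] := eqVneq (sort <=%O M) (sort <=%O y).
  have := congr1 (trunc_sum^~ b) eq_My; rewrite !trunc_sum_sort; lra.
have [a' [b' [ab' FMy]]] := lexle_sorted_trunc_sum_sort size_My lex_My neq_My.
have [ba'|a'b] := leP b a'.
  have [_ eqFb _] := FMy b (ltW (le_lt_trans ba' ab')); have := eqFb ba'; lra.
pose th := Num.min b' b.
have th_b' : th <= b' by rewrite ge_min lexx.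
have th_b : th <= b by rewrite ge_min lexx orbT.
have a'_th : a' < th by rewrite lt_min ab'.
have [_ _ /(_ a'_th) ltF] := FMy th th_b'; have [leF _ _] := Fmx th th_b.
have := dom th; lra.
Qed.

End TruncatedSum.

Lemma min_len_le_meet_join (R : realDomainType) (A B C D th : R) :
  (A <= B)%R -> (C <= D)%R ->
  (Num.min (B - A) th + Num.min (D - C) th <=
   Num.min (Num.min B D - Num.min A C) th + Num.min (Num.max B D - Num.max A C) th)%R.
Proof.
move=> AB CD; rewrite !minEle !maxEle.
by repeat (case: ifPn => [?|]; [|rewrite -ltNge => ?]); lra.
Qed.

Section Cutwise.
Variable n : nat.

Definition cutwise (op : nat -> nat -> nat) (X Y : seq nat) : seq nat :=
  mkseq (fun i => op (nth 0 X i) (nth 0 Y i)) n.+1.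

Lemma contig_alloc_nth_le t X i k : contig_alloc n t X -> (i <= k <= n)%N ->
  (nth 0 X i <= nth 0 X k)%N.
Proof.
case/and4P=> /eqP size_X _ sX _ /andP[ik kn].
apply: (sorted_leq_nth leq_trans leqnn 0 sX) => //; rewrite inE size_X ltnS //.
exact: leq_trans ik kn.
Qed.

Lemma contig_alloc_nth_le_last t X k : contig_alloc n t X -> (k <= n)%N ->
  (nth 0 X k <= t)%N.
Proof.
move=> cX kn; have /and4P[_ _ _ /eqP <-] := cX.
by apply: contig_alloc_nth_le cX _; rewrite kn leqnn.
Qed.

Lemma contig_alloc_cutwise op t t' X Y :
    (forall a b c d, a <= b -> c <= d -> op a c <= op b d)%N -> op 0%N 0%N = 0%N ->
    contig_alloc n t X -> contig_alloc n t' Y ->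
  contig_alloc n (op t t') (cutwise op X Y).
Proof.
move=> op_homo op00 cX cY.
move: (cX) (cY) => /and4P[/eqP size_X /eqP X0 _ /eqP Xn].
move=> /and4P[/eqP size_Y /eqP Y0 _ /eqP Yn].
apply/and4P; split; rewrite ?size_mkseq ?nth_mkseq ?X0 ?Y0 ?Xn ?Yn ?op00 //.
apply/(sortedP 0%N) => i; rewrite size_mkseq => i_n.
rewrite !nth_mkseq ?(ltnW i_n) //; apply: op_homo.
- by apply: contig_alloc_nth_le cX _; rewrite leqnSn.
- by apply: contig_alloc_nth_le cY _; rewrite leqnSn.
Qed.

End Cutwise.

Section PrefixSum.
Variables (R : realDomainType) (T : nat) (v : nat -> R).
Hypothesis v_ge0 : forall i, (i < T)%N -> (0 <= v i)%R.
Local Open Scope ring_scope.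

Definition prefix_sum k := \sum_(0 <= i < k) v i.

Lemma big_nat_prefix_sum a b : (a <= b)%N ->
  \sum_(a <= i < b) v i = prefix_sum b - prefix_sum a.
Proof. by move=> ab; rewrite /prefix_sum (@big_cat_nat _ _ _ a 0 b) //= addrC addrK. Qed.

Lemma prefix_sum_le a b : (a <= b <= T)%N -> prefix_sum a <= prefix_sum b.
Proof.
case/andP=> ab bT; rewrite -subr_ge0 -big_nat_prefix_sum // big_nat.
by apply: sumr_ge0 => i /andP[_ ib]; apply: v_ge0; exact: leq_trans ib bT.
Qed.

Lemma prefix_sum_minn a b : (a <= T)%N -> (b <= T)%N ->
  prefix_sum (minn a b) = Num.min (prefix_sum a) (prefix_sum b).
Proof.
move=> aT bT; case: (leqP a b) => [ab|/ltnW ba].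
  by rewrite (min_idPl (prefix_sum_le _)) // ab.
by rewrite (min_idPr (prefix_sum_le _)) // ba.
Qed.

Lemma prefix_sum_maxn a b : (a <= T)%N -> (b <= T)%N ->
  prefix_sum (maxn a b) = Num.max (prefix_sum a) (prefix_sum b).
Proof.
move=> aT bT; case: (leqP a b) => [ab|/ltnW ba].
  by rewrite (max_idPr (prefix_sum_le _)) // ab.
by rewrite (max_idPl (prefix_sum_le _)) // ba.
Qed.

Lemma agent_value_prefix_sum (P : seq nat) j : (nth 0 P j.-1 <= nth 0 P j)%N ->
  agent_value v P j = prefix_sum (nth 0 P j) - prefix_sum (nth 0 P j.-1).
Proof. exact: big_nat_prefix_sum. Qed.

Lemma trunc_sum_values_cutwise n t t' X Y th : (t <= T)%N -> (t' <= T)%N ->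
    contig_alloc n t X -> contig_alloc n t' Y ->
  trunc_sum (values v n X) th + trunc_sum (values v n Y) th <=
  trunc_sum (values v n (cutwise n minn X Y)) th +
  trunc_sum (values v n (cutwise n maxn X Y)) th.
Proof.
move=> tT t'T cX cY; rewrite /trunc_sum /values !big_map -!big_split /= !big_seq.
apply: ler_sum => k; rewrite mem_iota add1n ltnS => /andP[_ kn].
have bounds Z s : contig_alloc n s Z -> (s <= T)%N ->
    (nth 0 Z k.-1 <= nth 0 Z k <= T)%N.
  move=> cZ sT; rewrite (contig_alloc_nth_le cZ) ?leq_pred ?kn //=.
  exact: leq_trans (contig_alloc_nth_le_last cZ kn) sT.
have /andP[X_k1k X_kT] := bounds _ _ cX tT.
have /andP[Y_k1k Y_kT] := bounds _ _ cY t'T.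
have k1n : (k.-1 < n.+1)%N by rewrite ltnS (leq_trans (leq_pred k)).
rewrite !agent_value_prefix_sum /cutwise ?nth_mkseq ?ltnS //; try lia.
rewrite !prefix_sum_minn ?prefix_sum_maxn //; try lia.
by apply: min_len_le_meet_join; apply: prefix_sum_le; apply/andP; split.
Qed.

End PrefixSum.

Lemma lexle_nth_ge_eq d (U : orderType d) (x0 : U) (s u : seq U) : size s = size u ->
  (forall i, nth x0 u i <= nth x0 s i)%O -> lexle s u -> s = u.
Proof.
elim: s u => [|x s IHs] [|y u] //= [size_su] le_us.
case/orP=> [|/andP[/eqP-> lex_su]]; first by rewrite ltNge (le_us 0%N).
by rewrite (IHs u size_su (fun i => le_us i.+1) lex_su).
Qed.

Theorem mainTheorem5 (R : realDomainType) (n T : nat) (v : nat -> R)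
  (hn : (0 < n)%N) (hv : forall i, (i < T)%N -> (0 <= v i)%R) :
  forall (t : nat) (X Y : seq nat), (t < T)%N ->
    is_leximin2 v n t X -> is_leximin2 v n t.+1 Y ->
    forall j, (1 <= j <= n)%N -> (nth 0%N X j <= nth 0%N Y j)%N.
Proof.
move=> t X Y tT [[cX leximinX] minX] [[cY leximinY] _] j /andP[_ jn].
pose Xm := cutwise n minn X Y; pose XM := cutwise n maxn X Y.
have cXm : contig_alloc n (minn t t.+1) Xm.
  by apply: contig_alloc_cutwise cX cY => *; lia.
have cXM : contig_alloc n (maxn t t.+1) XM.
  by apply: contig_alloc_cutwise cX cY => *; lia.
rewrite (elimT minn_idPl (leqnSn t)) in cXm; rewrite (elimT maxn_idPr (leqnSn t)) in cXM.
have size_values P : size (values v n P) = n by rewrite size_map size_iota.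
have sort_Xm : sort <=%O (values v n Xm) = sort <=%O (values v n X).
  apply: leximin_exchange (leximinX _ cXm) (leximinY _ cXM);
    rewrite ?size_values // => th.
  exact: (trunc_sum_values_cutwise hv th (ltnW tT) tT cX cY).
have leximinXm : is_leximin v n t Xm.
  by split=> // Q cQ; rewrite /leximin_ge sort_Xm; exact: leximinX.
have -> : X = Xm.
  apply: lexle_nth_ge_eq (minX _ leximinXm).
    by have /and4P[/eqP-> _ _ _] := cX; rewrite size_mkseq.
  move=> i; have [i_n|i_n] := ltnP i n.+1; first by rewrite nth_mkseq //; exact: geq_minl.
  by rewrite nth_default // size_mkseq.
by rewrite nth_mkseq ?ltnS // geq_minr.
Qed.
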